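(* Let $R$ be a rod set and $\mathsf T$ an expansion subtree of $\mathrm{Tree}(R)$. Let $Q=\langle\mathrm{Inner}(\mathsf T)\rangle$ and $S=\langle\mathrm{Leaves}(\mathsf T)\rangle$. Then for every $n>0$, $$D(n,R,S)=C(n,Q).$$
   Context: A rod is a triple $(r,c,\varepsilon)$ with $r$ a positive integer (length), $c$ a tag (color) and $\varepsilon\in\{\pm1\}$ (sign); rods of sign $-1$ are antirods. A rod set is a set of rods with finitely many rods of each length. A train built from $R$ is a finite sequence of rods of $R$ (including the empty train $\Lambda$); its length is the sum of lengths and its sign the product of signs. For a set $X$ of trains, $\langle X\rangle$ is the rod set containing, for each nonempty train $\tau\in X$, one rod whose length and sign are those of $\tau$. $C(n,R)$ is the number of positive rods of length $n$ in $R$ minus the number of antirods of length $n$. $F(n,R)$ is the number of positive trains of length $n$ built from $R$ minus the number of negative ones, with $F(0,R)=1$ and $F(n,R)=0$ for $n<0$. The discrepancy is $D(n,R,S)=F(n,R)-\sum_{k\in S}(\operatorname{sign}k)F(n-\operatorname{len}(k),R)$. $\mathrm{Tree}(R)$ is the rooted tree with nodes the trains built from $R$, root $\Lambda$, and children of $\tau$ the trains $\tau k$, $k\in R$ (one per rod of $R$). An expansion subtree $\mathsf T$ is a rooted subtree containing all children of the root, and containing all children of any node of which it contains at least one child. $\mathrm{Inner}(\mathsf T)$ is the set of non-root nodes with children in $\mathsf T$; $\mathrm{Leaves}(\mathsf T)$ the set of nodes of $\mathsf T$ with no children in $\mathsf T$. *)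

From HB Require Import structures.
From mathcomp Require Import all_boot all_order all_algebra.
From mathcomp Require Import boolp.
Set Implicit Arguments. Unset Strict Implicit. Unset Printing Implicit Defensive.
Import Order.TTheory GRing.Theory Num.Theory.

(* A rod set: for each length m, the finite list of signs of its rods of
   length m (true = +1, false = -1 i.e. antirod).  The rods of length m are
   the positions i < size (R m); the position plays the role of the colour.
   Only lengths m > 0 carry rods (R 0 is ignored). *)
Definition rodset := nat -> seq bool.

Definition rod (R : rodset) :=
  {p : nat * nat | (0 < p.1)%N && (p.2 < size (R p.1))%N}.

Definition rlen (R : rodset) (k : rod R) : nat := (val k).1.
Definition rsgn (R : rodset) (k : rod R) : bool := nth true (R (val k).1) (val k).2.

Definition signz (b : bool) : int := if b then 1%R else (-1)%R.

Definition train (R : rodset) := seq (rod R).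
Definition tlen (R : rodset) (t : train R) : nat := \sum_(k <- t) rlen k.
Definition tsignz (R : rodset) (t : train R) : int := (\prod_(k <- t) signz (rsgn k))%R.
Definition tsgn (R : rodset) (t : train R) : bool := tsignz t == 1%R.

Definition rods_of_len (R : rodset) (m : nat) : seq (rod R) :=
  pmap insub [seq (m, i) | i <- iota 0 (size (R m))].
Definition rods_upto (R : rodset) (n : nat) : seq (rod R) :=
  flatten [seq rods_of_len R m | m <- iota 1 n].
Fixpoint tuples (T : Type) (j : nat) (l : seq T) : seq (seq T) :=
  if j is j'.+1 then [seq x :: t | x <- l, t <- tuples j' l] else [:: [::]].
Definition trains_of_len (R : rodset) (n : nat) : seq (train R) :=
  [seq t <- flatten [seq tuples j (rods_upto R n) | j <- iota 0 n.+1]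
     | tlen t == n].

Definition Ccount (n : nat) (R : rodset) : int :=
  if n == 0%N then 0%R else ((count id (R n))%:Z - (count negb (R n))%:Z)%R.

(* F(n,R) for n : int, with F(n,R) = 0 for n < 0 (and F(0,R) = 1 since the
   empty train is the only train of length 0). *)
Definition Fcount_nat (n : nat) (R : rodset) : int :=
  ((count (@tsgn R) (trains_of_len R n))%:Z
   - (count (fun t => ~~ tsgn t) (trains_of_len R n))%:Z)%R.
Definition Fcount (n : int) (R : rodset) : int :=
  if (n < 0)%R then 0%R else Fcount_nat `|n|%N R.

(* D(n,R,S) = F(n,R) - sum_{k in S} sign(k) F(n - len k, R).
   Rods k of S with len k > n contribute F(negative) = 0, so the (possibly
   infinite) sum is the finite sum over the rods of S of length <= n. *)
Definition Dcount (n : nat) (R S : rodset) : int :=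
  (Fcount n%:Z R
   - \sum_(1 <= m < n.+1) \sum_(b <- S m) signz b * Fcount (n%:Z - m%:Z) R)%R.

(* <X>: one rod per nonempty train of X, with the length and sign of that train *)
Definition gen (R : rodset) (X : train R -> Prop) : rodset :=
  fun m => if m == 0%N then [::]
           else [seq tsgn t | t <- trains_of_len R m & `[< X t /\ t <> [::] >]].

(* Tree(R): nodes are the trains, children of t are the trains rcons t k.
   A rooted subtree is given by its (prefix-closed) set of nodes. *)
Definition expansion_subtree (R : rodset) (T : train R -> Prop) : Prop :=
  [/\ T [::],
      (forall t k, T (rcons t k) -> T t),
      (forall k, T [:: k]) &
      (forall t k k', T (rcons t k) -> T (rcons t k'))].

Definition Inner (R : rodset) (T : train R -> Prop) : train R -> Prop :=
  fun t => t <> [::] /\ T t /\ exists k, T (rcons t k).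
Definition Leaves (R : rodset) (T : train R -> Prop) : train R -> Prop :=
  fun t => T t /\ forall k, ~ T (rcons t k).

From HB Require Import structures.
From mathcomp Require Import all_boot all_order all_algebra.
From mathcomp Require Import boolp ring zify.
Import Order.TTheory GRing.Theory Num.Theory.
Set Implicit Arguments. Unset Strict Implicit. Unset Printing Implicit Defensive.

(* Writing [sign t] for the sign of a train, F(n) is the sum of [sign u] over
   the trains u of length n, and [sign l * F(n - len l)] is the same sum
   restricted to the trains u having l as a prefix.  Hence D(n,R,S) is the sum
   over u of [sign u] times one minus the number of nonempty leaves of T that
   are prefixes of u.  The nonempty prefixes of u lying in T form an initial
   segment of length at least one, and since T contains all or none of the
   children of a node, its last element is a leaf unless it is u itself and u
   is inner.  So u is counted with multiplicity exactly [u is inner], which is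
   C(n,Q). *)

Lemma uniq_flatten_map (I T : eqType) (s : seq I) (f : I -> seq T) (g : T -> I) :
  uniq s -> (forall i, i \in s -> uniq (f i)) ->
  (forall i x, i \in s -> x \in f i -> g x = i) -> uniq (flatten (map f s)).
Proof.
elim: s => [|i s IHs] //= /andP[i_notin_s uniq_s] uniq_f f_g.
rewrite cat_uniq uniq_f ?mem_head //= IHs //; first last.
- by move=> j x s_j; apply: f_g; rewrite inE s_j orbT.
- by move=> j s_j; apply: uniq_f; rewrite inE s_j orbT.
rewrite andbT; apply/hasPn => x /flatten_mapP[j s_j fj_x]; apply/negP => fi_x.
have gx_i := f_g i x (mem_head _ _) fi_x.
have gx_j : g x = j by apply: f_g; rewrite ?inE ?s_j ?orbT.
by move: i_notin_s; rewrite -gx_i gx_j s_j.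
Qed.

Lemma mem_tuples (T : eqType) j (l : seq T) t :
  (t \in tuples j l) = (size t == j) && all (mem l) t.
Proof.
elim: j t => [|j IHj] t /=; first by case: t.
apply/allpairsP/idP => [[[x u] [l_x tu ->]]|].
- by move: tu; rewrite IHj /= eqSS l_x => /andP[-> ->].
- case: t => [|x u] //= /andP[size_u /andP[l_x all_u]].
  by exists (x, u); split; rewrite // IHj -(eqSS (size u)) size_u.
Qed.

Lemma uniq_tuples (T : eqType) j (l : seq T) : uniq l -> uniq (tuples j l).
Proof.
move=> uniq_l; elim: j => [|j IHj] //=.
by apply: allpairs_uniq => // -[x u] [y v] _ _ /= [-> ->].
Qed.

Lemma count_drops_iota (b : nat -> bool) i :
  (forall k, b k.+1 -> b k) -> b 0 ->
  count (fun k => b k && ~~ b k.+1) (iota 0 i) = ~~ b i.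
Proof.
move=> b_antitone b0; elim: i => [|i IHi]; first by rewrite b0.
rewrite -addn1 iotaD count_cat IHi /= add0n addn0 addn1.
by case/boolP: (b i.+1) => [/b_antitone -> | _]; case: (b i).
Qed.

Section Trains.
Variable R : rodset.

Lemma rlen_gt0 (k : rod R) : (0 < rlen k)%N.
Proof. by case/andP: (valP k). Qed.

Lemma tlen_cons (k : rod R) t : tlen (k :: t) = (rlen k + tlen t)%N.
Proof. by rewrite /tlen big_cons. Qed.

Lemma tlen_cat (t u : train R) : tlen (t ++ u) = (tlen t + tlen u)%N.
Proof. by rewrite /tlen big_cat. Qed.

Lemma size_le_tlen (t : train R) : (size t <= tlen t)%N.
Proof.
elim: t => [|k t IHt] //=; rewrite tlen_cons -add1n leq_add //; exact: rlen_gt0.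
Qed.

Lemma rlen_le_tlen (t : train R) k : k \in t -> (rlen k <= tlen t)%N.
Proof. by elim: t => [|x t IHt] //; rewrite inE tlen_cons => /predU1P[->|/IHt]; lia. Qed.

Lemma tsignz_cat (t u : train R) : tsignz (t ++ u) = (tsignz t * tsignz u)%R.
Proof. by rewrite /tsignz big_cat. Qed.

Lemma signz_tsgn (t : train R) : signz (tsgn t) = tsignz t.
Proof.
suff: tsignz t = 1%R \/ tsignz t = (-1)%R by rewrite /tsgn /signz => -[] ->.
elim: t => [|k t IHt]; first by left; rewrite /tsignz big_nil.
rewrite /tsignz big_cons -/(tsignz t) /signz.
by case: (rsgn k); case: IHt => ->; rewrite ?mulN1r ?mul1r ?opprK; auto.
Qed.

Lemma mem_rods_of_len m k : (k \in rods_of_len R m) = (rlen k == m).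
Proof.
rewrite /rods_of_len mem_pmap_sub /rlen; case: k => [[a b] /= /andP[_ Hb]].
apply/mapP/eqP => [[i _ [->]] //| <-].
by exists b; rewrite ?mem_iota.
Qed.

Lemma uniq_rods_of_len m : uniq (rods_of_len R m).
Proof. by apply: pmap_sub_uniq; rewrite map_inj_uniq ?iota_uniq // => x y []. Qed.

Lemma mem_rods_upto n k : (k \in rods_upto R n) = (rlen k <= n)%N.
Proof.
rewrite /rods_upto; apply/flatten_mapP/idP => [[m] | k_le_n].
- by rewrite mem_iota mem_rods_of_len => ? /eqP ->; lia.
- by exists (rlen k); rewrite ?mem_rods_of_len // mem_iota rlen_gt0 add1n ltnS.
Qed.

Lemma uniq_rods_upto n : uniq (rods_upto R n).
Proof.
apply: (@uniq_flatten_map _ _ _ _ (@rlen R)); rewrite ?iota_uniq //.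
- by move=> *; apply: uniq_rods_of_len.
- by move=> i x _; rewrite mem_rods_of_len => /eqP.
Qed.

Lemma mem_trains_of_len n t : (t \in trains_of_len R n) = (tlen t == n).
Proof.
rewrite /trains_of_len mem_filter andb_idr // => /eqP tlen_t.
apply/flatten_mapP; exists (size t).
  by rewrite mem_iota add0n ltnS -tlen_t size_le_tlen.
rewrite mem_tuples eqxx; apply/allP => k t_k.
by rewrite [mem _ _]/= mem_rods_upto -tlen_t rlen_le_tlen.
Qed.

Lemma uniq_trains_of_len n : uniq (trains_of_len R n).
Proof.
apply/filter_uniq/(@uniq_flatten_map _ _ _ _ size); rewrite ?iota_uniq //.
- by move=> *; apply/uniq_tuples/uniq_rods_upto.
- by move=> i x _; rewrite mem_tuples => /andP[/eqP].
Qed.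

Definition trains_upto n := flatten [seq trains_of_len R m | m <- iota 1 n].

Lemma mem_trains_upto n t : (t \in trains_upto n) = (0 < tlen t <= n)%N.
Proof.
rewrite /trains_upto; apply/flatten_mapP/idP => [[m] | tlen_t].
- by rewrite mem_iota mem_trains_of_len => ? /eqP ->; lia.
- by exists (tlen t); rewrite ?mem_trains_of_len // mem_iota; lia.
Qed.

Lemma uniq_trains_upto n : uniq (trains_upto n).
Proof.
apply: (@uniq_flatten_map _ _ _ _ (@tlen R)); rewrite ?iota_uniq //.
- by move=> *; apply: uniq_trains_of_len.
- by move=> i x _; rewrite mem_trains_of_len => /eqP.
Qed.

Lemma signed_count (ts : seq (train R)) :
  ((count id (map (@tsgn R) ts))%:Z - (count negb (map (@tsgn R) ts))%:Z)%R
  = (\sum_(t <- ts) tsignz t)%R.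
Proof.
elim: ts => [|t ts IHts]; first by rewrite big_nil.
rewrite big_cons /= -IHts -signz_tsgn /signz.
by case: (tsgn t) => /=; rewrite ?add0n ?add1n ?PoszD; ring.
Qed.

Lemma Fcount_natE n : Fcount_nat n R = (\sum_(t <- trains_of_len R n) tsignz t)%R.
Proof. by rewrite -signed_count !count_map. Qed.

Definition ingen (X : train R -> Prop) (t : train R) := `[< X t /\ t <> [::] >].

Lemma Ccount_gen X n : (0 < n)%N ->
  Ccount n (gen X) = (\sum_(u <- trains_of_len R n) tsignz u *+ ingen X u)%R.
Proof.
move=> n_gt0; rewrite /Ccount /gen gtn_eqF // signed_count big_filter big_mkcond.
by apply: eq_bigr => u _; rewrite /ingen; case: `[< _ >]; rewrite ?mulr1n ?mulr0n.
Qed.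

Lemma prefix_signed_sum n (t : train R) : (tlen t <= n)%N ->
  (tsignz t * Fcount_nat (n - tlen t) R
   = \sum_(u <- trains_of_len R n | prefix t u) tsignz u)%R.
Proof.
move=> tlen_t; rewrite Fcount_natE big_distrr /=.
under eq_bigr do rewrite -tsignz_cat.
rewrite -(big_map (cat t) xpredT) -[in RHS]big_filter.
apply: perm_big; apply: uniq_perm.
- rewrite map_inj_uniq ?uniq_trains_of_len // => v w /(congr1 (drop (size t))).
  by rewrite !drop_size_cat.
- exact/filter_uniq/uniq_trains_of_len.
move=> u; rewrite mem_filter mem_trains_of_len; apply/mapP/andP => [[v] | [/prefixP[v ->] /eqP]].
- rewrite mem_trains_of_len => /eqP tlen_v ->.
  by rewrite prefix_prefix tlen_cat tlen_v; split; lia.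
- rewrite tlen_cat => tlen_tv; exists v; rewrite // mem_trains_of_len; apply/eqP; lia.
Qed.

Lemma perm_prefixes n (u : train R) : (tlen u <= n)%N ->
  perm_eq [seq l <- trains_upto n | prefix l u] [seq take k.+1 u | k <- iota 0 (size u)].
Proof.
move=> tlen_u; apply: uniq_perm.
- exact/filter_uniq/uniq_trains_upto.
- rewrite map_inj_in_uniq ?iota_uniq // => i j; rewrite !mem_iota /= => i_lt j_lt.
  by move/(congr1 size); rewrite !size_takel // => -[].
move=> l; rewrite mem_filter mem_trains_upto; apply/andP/mapP => [[l_u l_len] | [k]].
- have size_l := size_prefix l_u.
  case/prefixP: l_u l_len size_l => v ->; case: l => [|x l]; first by rewrite /tlen big_nil.
  by move=> _ size_l; exists (size l); rewrite ?mem_iota //= take_size_cat.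
- rewrite mem_iota /= => k_lt ->; rewrite prefix_take; split => //.
  have := size_le_tlen (take k.+1 u); rewrite size_takel //.
  by move: tlen_u; rewrite -{1}(cat_take_drop k.+1 u) tlen_cat; lia.
Qed.

Lemma sum_gen_Fcount X n :
  (\sum_(1 <= m < n.+1) \sum_(b <- gen X m) signz b * Fcount (n%:Z - m%:Z) R
   = \sum_(l <- trains_upto n | ingen X l) tsignz l * Fcount_nat (n - tlen l) R)%R.
Proof.
rewrite big_flatten big_map /index_iota subSS subn0.
apply: eq_big_seq => m; rewrite mem_iota => m_range.
rewrite /gen gtn_eqF; last by lia.
rewrite big_map big_filter big_seq_cond [RHS]big_seq_cond.
apply: eq_bigr => l /andP[]; rewrite mem_trains_of_len => /eqP tlen_l _.
by rewrite signz_tsgn subzn -?tlen_l //; lia.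
Qed.

Lemma Dcount_gen X n :
  (Dcount n R (gen X) = \sum_(u <- trains_of_len R n)
     tsignz u * (1 - (count (fun l => ingen X l && prefix l u) (trains_upto n))%:Z))%R.
Proof.
rewrite /Dcount sum_gen_Fcount -[Fcount _ _]/(Fcount_nat n R) Fcount_natE [X in (_ - X)%R]big_seq_cond.
rewrite [X in (_ - X)%R](eq_bigr (fun l => \sum_(u <- trains_of_len R n | prefix l u) tsignz u)%R);
  last by move=> l /andP[]; rewrite mem_trains_upto => /andP[_ /prefix_signed_sum].
rewrite -big_seq_cond (exchange_big_dep xpredT) //= -sumrB.
apply: eq_bigr => u _; rewrite big_const_seq -count_filter.
by rewrite iter_addr_0 mulrBr mulr1 -natz mulr_natr.
Qed.

End Trains.

Section ExpansionSubtree.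
Variables (R : rodset) (T : train R -> Prop).
Hypothesis T_expansion : expansion_subtree T.

Definition memT (t : train R) := `[< T t >].

Lemma memT_take_succ (u : train R) k : memT (take k.+1 u) -> memT (take k u).
Proof.
case: T_expansion => _ T_prefix _ _.
have [k_lt|k_ge] := ltnP k (size u); last by rewrite !take_oversize // ltnW.
case: u k_lt => [|x u] // k_lt; rewrite /memT (take_nth x k_lt).
by move/asboolP/T_prefix/asboolP.
Qed.

Lemma leaf_take (u : train R) k : (0 < k < size u)%N ->
  ingen (Leaves T) (take k u) = memT (take k u) && ~~ memT (take k.+1 u).
Proof.
case: T_expansion => _ _ _ T_siblings.
case: u => [|x u] /andP[k_gt0 k_lt] //; rewrite /ingen /memT (take_nth x k_lt).
apply/asboolP/andP => [[[T_t no_child] _] | [/asboolP T_t /asboolP no_child]].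
  by split; apply/asboolP => //; apply: no_child.
split; last by move/(congr1 size); rewrite size_takel ?(ltnW k_lt) //=; lia.
by split=> // k' /T_siblings.
Qed.

Lemma leaf_full (u : train R) : u <> [::] ->
  ingen (Leaves T) u = memT u && ~~ ingen (Inner T) u.
Proof.
move=> u_neq0; rewrite /ingen /memT.
apply/asboolP/andP => [[[T_u no_child] _] | [/asboolP T_u /asboolP not_inner]].
  by split; [apply/asboolP | apply/asboolP => -[[_ [_ [k /no_child]]]]].
do 2!split=> //; move=> k T_uk; apply: not_inner.
by split=> //; split=> //; split=> //; exists k.
Qed.

(* The shortest prefix [take 1 u] lies in T because T contains every child of the root. *)
Lemma count_leaf_prefixes (u : train R) : u <> [::] ->
  count (fun k => ingen (Leaves T) (take k.+1 u)) (iota 0 (size u)) = ~~ ingen (Inner T) u.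
Proof.
case: T_expansion => _ _ T_children _; case: u => [|x u] // _.
have drops k : k \in iota 0 (size u) -> ingen (Leaves T) (take k.+1 (x :: u))
    = memT (take k.+1 (x :: u)) && ~~ memT (take k.+2 (x :: u)).
  by rewrite mem_iota add0n => k_lt; rewrite leaf_take //=; lia.
rewrite [size _]/= -addn1 iotaD count_cat (eq_in_count drops) count_drops_iota; first last.
- by rewrite /memT /= take0; apply/asboolP.
- by move=> k; apply: memT_take_succ.
rewrite add0n /= addn0 take_size leaf_full //.
case/boolP: (ingen (Inner T) _) => [/asboolP[[_ [T_u _]] _] | _]; last by case: memT.
by rewrite /memT asboolT.
Qed.

End ExpansionSubtree.

Theorem mainTheorem4 (R : rodset) (T : train R -> Prop) :
  expansion_subtree T ->
  forall n : nat, (0 < n)%N ->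
    Dcount n R (gen (Leaves T)) = Ccount n (gen (Inner T)).
Proof.
move=> T_expansion n n_gt0.
rewrite Dcount_gen Ccount_gen //; apply: eq_big_seq => u.
rewrite mem_trains_of_len => /eqP tlen_u.
have u_neq0 : u <> [::] by move=> u0; move: tlen_u n_gt0; rewrite u0 /tlen big_nil => <-.
rewrite -count_filter (permP (perm_prefixes (eq_leq tlen_u))) count_map.
rewrite (count_leaf_prefixes T_expansion u_neq0).
by case: ingen; rewrite ?subrr ?subr0 ?mulr0 ?mulr1 ?mulr1n ?mulr0n.
Qed.
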